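(* Let $\Sigma$ be a non-empty finite or countably infinite alphabet, $p$ a positive Bernoulli distribution on $\Sigma$, and $A=(Q,\Sigma,\delta,q_s,F)$ a strongly connected DFA with $F\neq\emptyset$. Then there exists a real number $c>0$ such that for every $\epsilon>0$, $\lim_{n\to\infty}\mu_p(E_n(c-\epsilon))=0$.
   Context: $p:\Sigma\to(0,1]$ with $\sum_ap(a)=1$; $\mu_p(a_1\cdots a_n)=\prod_ip(a_i)$ and for $W\subseteq\Sigma^*$, $\mu_p(W)=\sum_{w\in W}\mu_p(w)$. For $q\in Q$, $A_q$ denotes the DFA $A$ with start state $q$, and for a word $w=w_1\cdots w_n$, $A_q[w]$ is the subsequence of those $w_i$ with $\delta^*(q,w_1\cdots w_{i-1})\in F$. For real $b$ and $n\ge1$: $E_n(b,q)=\{w\in\Sigma^n: |A_q[w]|\le bn\}$ and $E_n(b)=\bigcup_{q\in Q}E_n(b,q)$. $A$ is strongly connected if its underlying directed graph (edges $q\to\delta(q,a)$) is strongly connected. *)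

From HB Require Import structures.
From mathcomp Require Import all_boot all_order all_algebra.
From mathcomp Require Import all_classical all_reals all_analysis.
From Stdlib Require Import Relations.Relation_Operators.
Set Implicit Arguments. Unset Strict Implicit. Unset Printing Implicit Defensive.
Import Order.TTheory GRing.Theory Num.Theory.
Local Open Scope ring_scope.

Section Defs.
Variables (R : realType) (Sigma : countType).

Definition mu_word (p : Sigma -> R) (w : seq Sigma) : R :=
  \prod_(a <- w) p a.

Definition mu_p (p : Sigma -> R) (W : set (seq Sigma)) : \bar R :=
  \esum_(w in W) (mu_word p w)%:E.

Definition positive_bernoulli (p : Sigma -> R) : Prop :=
  (forall a, 0 < p a <= 1) /\ (\esum_(a in [set: Sigma]) (p a)%:E = 1%E)%E.

Variable Q : finType.

Definition dfa_edge (delta : Q -> Sigma -> Q) (q q' : Q) : Prop :=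
  exists a, delta q a = q'.

Definition strongly_connected (delta : Q -> Sigma -> Q) : Prop :=
  forall q q' : Q, clos_refl_trans Q (dfa_edge delta) q q'.

Fixpoint A_sub (delta : Q -> Sigma -> Q) (F : {set Q}) (q : Q) (w : seq Sigma)
  : seq Sigma :=
  match w with
  | [::] => [::]
  | a :: w' => if q \in F then a :: A_sub delta F (delta q a) w'
               else A_sub delta F (delta q a) w'
  end.

Definition E_nq (delta : Q -> Sigma -> Q) (F : {set Q}) (n : nat) (b : R) (q : Q)
  : set (seq Sigma) :=
  [set w | size w = n /\ (size (A_sub delta F q w))%:R <= b * n%:R].

Definition E_n (delta : Q -> Sigma -> Q) (F : {set Q}) (n : nat) (b : R)
  : set (seq Sigma) :=
  [set w | exists q : Q, E_nq delta F n b q w].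

End Defs.

From HB Require Import structures.
From mathcomp Require Import all_boot all_order all_algebra.
From mathcomp Require Import all_classical all_reals all_analysis.
From mathcomp Require Import ring lra.
From Stdlib Require Import Relations.Relation_Operators Relations.Operators_Properties.
Import Order.TTheory GRing.Theory Num.Theory.
Local Open Scope classical_set_scope.
Local Open Scope ring_scope.
Set Implicit Arguments. Unset Strict Implicit. Unset Printing Implicit Defensive.

(* Proof by an exponential Chernoff bound.  Discount every letter read in an
   accepting state by 1/2 and let G_n(q) be the mu_p-mass of the words of
   length n, each weighted by 2^(-|A_q[w]|).
   - Drift: with d q a letter-distance from q to F and r > 0 small,
     h q = 4 - r^(d q) lies in [1, 4] and satisfies
       sum_a p(a) t(q) h(delta q a) <= lam h(q),  lam = 1 - r^N/4 < 1,
     where t(q) is the discount of q; hence G_n(q) <= 4 lam^n.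
   - Chernoff: a word of E_n(b) with b K <= 1 has |A_q[w]| <= n/K for some q,
     so mu_p(E_n(b)) <= 2^(n/K) sum_q G_n(q).
   - Choosing K with lam^K <= 1/4 and c = 1/K gives
     mu_p(E_n(c - eps)) <= 4 |Q| (1/2)^(n/K), which tends to 0.
   The file proves a few facts on nonnegative extended sums, then the
   discounted-mass bounds, then the drift function, and finally the theorem. *)

Section ExtendedSums.
Variables (R : realType) (T : choiceType).

Lemma esumZl_le (I : set T) (c : R) (f : T -> \bar R) :
  0 <= c -> (forall i, (0 <= f i)%E) ->
  (\esum_(i in I) (c%:E * f i) <= c%:E * \esum_(i in I) f i)%E.
Proof.
move=> c0 f0; apply: ge_ereal_sup => _ [X [finX XI] <-] /=.
rewrite fsbig_finite //= -ge0_sume_distrr; last by move=> i _; exact: f0.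
apply: lee_wpmul2l; first by rewrite lee_fin.
by rewrite -fsbig_finite //; apply: ereal_sup_ubound; exists X.
Qed.

Lemma esum_subset_le (I J : set T) (f : T -> \bar R) :
  I `<=` J -> (forall i, J i -> (0 <= f i)%E) ->
  (\esum_(i in I) f i <= \esum_(i in J) f i)%E.
Proof.
move=> IJ f0; rewrite (esum_mkcond I) (esum_mkcond J); apply: le_esum => i _.
case: ifPn => iI; first by rewrite ifT // inE; apply: IJ; rewrite -inE.
by case: ifPn => // /[!inE] /f0.
Qed.

End ExtendedSums.

Lemma esum_words_succ (R : realType) (Sigma : countType) (n : nat)
  (g : seq Sigma -> \bar R) : (forall w, (0 <= g w)%E) ->
  \esum_(w in [set w : seq Sigma | size w = n.+1]) g w =
  \esum_(a in [set: Sigma]) \esum_(v in [set v : seq Sigma | size v = n]) g (a :: v).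
Proof.
move=> g0; rewrite esum_esum; last by move=> *; exact: g0.
rewrite (reindex_esum ([set: Sigma] `*`` (fun=> [set v : seq Sigma | size v = n]))
  _ (fun k => k.1 :: k.2)) //.
split.
- by move=> [a v] /= [_ /= ->].
- by move=> [a v] [b u] _ _ /= [-> ->].
- by move=> [|a v] //= [Hv]; exists (a, v).
Qed.

Lemma esum_scaled_distribution (R : realType) (Sigma : countType)
  (p : Sigma -> R) (C : R) : positive_bernoulli p -> 0 <= C ->
  (\esum_(a in [set: Sigma]) (C * p a)%:E <= C%:E)%E.
Proof.
move=> [p01 psum] C0; under eq_esum do rewrite EFinM.
apply: le_trans; first apply: esumZl_le => //.
  by move=> a; rewrite lee_fin; have /andP[/ltW] := p01 a.
by rewrite psum mule1.
Qed.

(* The Chernoff-type weight: every letter read in an accepting state is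
   discounted by 1/2, so that a small |A_q[w]| makes the weight large. *)
Section DiscountedMass.
Variables (R : realType) (Sigma : countType) (p : Sigma -> R).
Variables (Q : finType) (delta : Q -> Sigma -> Q) (F : {set Q}).
Hypothesis p_ge0 : forall a, 0 <= p a.

Definition discount (q : Q) : R := if q \in F then 2^-1 else 1.

Definition discounted_weight (q : Q) (w : seq Sigma) : R :=
  mu_word p w * (2^-1) ^+ size (A_sub delta F q w).

Definition discounted_mass (n : nat) (q : Q) : \bar R :=
  \esum_(w in [set w : seq Sigma | size w = n]) (discounted_weight q w)%:E.

Lemma discount_ge0 q : 0 <= discount q.
Proof. by rewrite /discount; case: ifP. Qed.

Lemma mu_word_ge0 w : 0 <= mu_word p w.
Proof. by apply: prodr_ge0 => a _. Qed.

Lemma discounted_weight_ge0 q w : 0 <= discounted_weight q w.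
Proof. by rewrite mulr_ge0 ?mu_word_ge0 // exprn_ge0 // invr_ge0. Qed.

Lemma discounted_weight_cons q a v :
  discounted_weight q (a :: v) =
  p a * discount q * discounted_weight (delta q a) v.
Proof.
rewrite /discounted_weight /discount /mu_word big_cons /=.
by case: ifP => _ /=; [rewrite exprS; ring | rewrite mulr1; ring].
Qed.

Lemma discounted_mass_geometric (h : Q -> R) (lam : R) :
  0 <= lam -> (forall q, 1 <= h q) ->
  (forall q, (\esum_(a in [set: Sigma]) (p a * discount q * h (delta q a))%:E
              <= (lam * h q)%:E)%E) ->
  forall n q, (discounted_mass n q <= (lam ^+ n * h q)%:E)%E.
Proof.
move=> lam0 h1 drift; elim=> [|n IH] q.
  rewrite /discounted_mass (_ : [set w | size w = 0%N] = [set [::]]); last first.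
    by apply/seteqP; split => [[|]//|w /= ->].
  rewrite esum_set1; last by rewrite lee_fin discounted_weight_ge0.
  by rewrite /discounted_weight /mu_word big_nil /= !expr0 mulr1 mul1r lee_fin.
have pt_ge0 a : 0 <= p a * discount q by rewrite mulr_ge0 ?discount_ge0.
have step_le : (discounted_mass n.+1 q <= \esum_(a in [set: Sigma])
    ((p a * discount q)%:E * discounted_mass n (delta q a)))%E.
  rewrite /discounted_mass esum_words_succ; last first.
    by move=> w; rewrite lee_fin discounted_weight_ge0.
  apply: le_esum => a _; under eq_esum do rewrite discounted_weight_cons EFinM.
  by apply: esumZl_le => // v; rewrite lee_fin discounted_weight_ge0.
apply: (le_trans step_le); apply: (@le_trans _ _ (\esum_(a in [set: Sigma])
   ((lam ^+ n)%:E * (p a * discount q * h (delta q a))%:E))%E).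
  apply: le_esum => a _.
  rewrite [leRHS](_ : _ = (p a * discount q)%:E * (lam ^+ n * h (delta q a))%:E)%E;
    last by rewrite -!EFinM; congr EFin; ring.
  by apply: lee_wpmul2l; [rewrite lee_fin | exact: IH].
apply: le_trans; first apply: esumZl_le.
- exact: exprn_ge0.
- by move=> a; rewrite lee_fin mulr_ge0 // (le_trans _ (h1 _)).
by rewrite exprSr -mulrA EFinM; apply: lee_wpmul2l; rewrite ?lee_fin ?exprn_ge0.
Qed.

(* Chernoff bound: if b K <= 1, every word of E_n(b) has some start state q
   with |A_q[w]| <= n/K, hence 2^(n/K) 2^(-|A_q[w]|) >= 1. *)
Lemma mu_E_n_chernoff (K n : nat) (b : R) : (0 < K)%N -> b * K%:R <= 1 ->
  (mu_p p (E_n delta F n b) <=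
    \sum_(q : Q) (((2 : R) ^+ (n %/ K))%:E * discounted_mass n q))%E.
Proof.
move=> K0 bK; set j := (n %/ K)%N.
have term_ge0 q w : (0 <= ((2 : R) ^+ j * discounted_weight q w)%:E)%E.
  by rewrite lee_fin mulr_ge0 ?exprn_ge0 ?discounted_weight_ge0.
have short_run q w : (size (A_sub delta F q w))%:R <= b * n%:R ->
    (size (A_sub delta F q w) <= j)%N.
  move=> HA; rewrite leq_divRL // -(ler_nat R) natrM.
  apply: (le_trans (ler_wpM2r _ HA)) => //.
  by rewrite mulrAC -[leRHS]mul1r ler_wpM2r.
apply: (@le_trans _ _ (\esum_(w in [set w : seq Sigma | size w = n])
    \sum_(q : Q) ((2 : R) ^+ j * discounted_weight q w)%:E)%E).
  apply: (@le_trans _ _ (\esum_(w in E_n delta F n b)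
      \sum_(q : Q) ((2 : R) ^+ j * discounted_weight q w)%:E)%E).
    apply: le_esum => w [q0 [_ /short_run Hj]].
    rewrite (bigD1 q0) //=; apply: le_trans (leeDl _ _); last first.
      by apply: sume_ge0 => q _.
    rewrite lee_fin /discounted_weight mulrCA -[leLHS]mulr1 ler_wpM2l ?mu_word_ge0 //.
    rewrite exprVn ler_pdivlMr ?exprn_gt0 // mul1r.
    by apply: ler_weXn2l => //; rewrite ler1n.
  apply: esum_subset_le; first by move=> w [q [Hs _]].
  by move=> w _; apply: sume_ge0 => q _.
rewrite esum_sum; last by move=> w q _ _.
apply: lee_sum => q _; under eq_esum do rewrite EFinM.
by apply: esumZl_le; [exact: exprn_ge0 | move=> w; rewrite lee_fin discounted_weight_ge0].
Qed.

End DiscountedMass.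
Arguments discount {R Q} F q.

(* Drift function: h(q) = 4 - r^(d q), where d q is a distance from q to F
   along a chosen letter path.  Outside F the chosen letter, of probability
   >= 2r, lowers d and so gains r^(d q) against the average; inside F the
   factor 1/2 does the work.  Either way h contracts by 1 - r^N/4. *)
Section DriftFunction.
Variables (R : realType) (Sigma : countType) (p : Sigma -> R).
Variables (Q : finType) (delta : Q -> Sigma -> Q) (F : {set Q}).

Lemma distance_to_accepting (a0 : Sigma) :
  strongly_connected delta -> F != finset.set0 ->
  exists (d : Q -> nat) (aq : Q -> Sigma),
    forall q, q \notin F -> ((d (delta q (aq q))).+1 <= d q)%N.
Proof.
move=> sc /set0Pn [f fF].
pose reach k q := exists w : seq Sigma, size w = k /\ foldl delta q w \in F.
have reachable q : exists k, `[< reach k q >].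
  have /clos_rt_rt1n_iff H := sc q f; move: fF.
  elim: H => [x xF|x y z [a <-] _ IH /IH [k /asboolP [w [Hs Hw]]]].
    by exists 0%N; apply/asboolP; exists [::].
  by exists k.+1; apply/asboolP; exists (a :: w); rewrite /= Hs.
pose d q := ex_minn (reachable q).
have descent q : exists a, q \notin F -> ((d (delta q a)).+1 <= d q)%N.
  case: (boolP (q \in F)) => qF; first by exists a0.
  rewrite /d; case: ex_minnP => k /asboolP [[|a w] [Hs Hw]] kmin.
    by rewrite /= Hw in qF.
  exists a => _; rewrite -Hs /= ltnS; case: ex_minnP => m _ mmin.
  by apply: mmin; apply/asboolP; exists w.
have [aq Haq] := choice descent.
by exists d, aq.
Qed.

Lemma drift_inequality (d : Q -> nat) (aq : Q -> Sigma) (N : nat) (r : R) :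
  positive_bernoulli p ->
  (forall q, q \notin F -> ((d (delta q (aq q))).+1 <= d q)%N) ->
  (forall q, (d q <= N)%N) ->
  0 < r -> r <= 2^-1 -> (forall q, 2 * r <= p (aq q)) ->
  forall q, (\esum_(a in [set: Sigma])
     (p a * discount F q * (4 - r ^+ d (delta q a)))%:E
     <= ((1 - r ^+ N / 4) * (4 - r ^+ d q))%:E)%E.
Proof.
move=> pb descent_aq dN r0 rh aq_likely q.
have [p01 _] := pb.
have p0 a : 0 <= p a by have /andP[/ltW] := p01 a.
have r1 : r <= 1 by apply: le_trans rh _; rewrite invf_le1 // ler1n.
have rk k : 0 <= r ^+ k <= 1.
  by rewrite exprn_ge0 ?exprn_ile1 // ltW.
have rNk : r ^+ N <= r ^+ d q by apply: ler_wiXn2l => //; rewrite ltW.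
have /andP[? ?] := rk N; have /andP[? ?] := rk (d q).
rewrite /discount; case: ifPn => qF.
  apply: le_trans; first apply: (@le_esum _ _ _ _ (fun a => (2 * p a)%:E)).
    move=> a _; rewrite lee_fin; have /andP[? ?] := rk (d (delta q a)).
    have := p0 a; nra.
  by apply: le_trans; [exact: esum_scaled_distribution | rewrite lee_fin; nra].
set j := d (delta q (aq q)); set c := p (aq q) * r ^+ j.
have gain : 2 * r ^+ d q <= c.
  have : r ^+ d q <= r ^+ j.+1 by apply: ler_wiXn2l => //; rewrite ?ltW ?descent_aq.
  rewrite /c exprS; have /andP[? ?] := rk j; have := aq_likely q; nra.
have with_gain : (\esum_(a in [set: Sigma]) (p a * 1 * (4 - r ^+ d (delta q a)))%:E
     + c%:E <= 4%:E)%E.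
  apply: (@le_trans _ _ (\esum_(a in [set: Sigma])
      ((p a * 1 * (4 - r ^+ d (delta q a)))%:E
      + (if a == aq q then c else 0)%:E))%E).
    rewrite esumD; last 2 first.
    - move=> a _; rewrite lee_fin; have /andP[? ?] := rk (d (delta q a)).
      have := p0 a; nra.
    - move=> a _; rewrite lee_fin; case: ifP => // _.
      by rewrite /c mulr_ge0 //; have /andP[] := rk j.
    rewrite leeD2l //; apply: esum_ge; exists [set aq q].
      by split => //; exact: finite_set1.
    by rewrite fsbig_set1 eqxx.
  apply: le_trans; last apply: (@esum_scaled_distribution _ _ p 4) => //.
  apply: le_esum => a _; rewrite -EFinD lee_fin.
  have /andP[? ?] := rk (d (delta q a)); have := p0 a.
  by case: eqP => [->|_]; rewrite /c /j; nra.
rewrite -leeBrDr // in with_gain; apply: le_trans with_gain _.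
by rewrite -EFinB lee_fin; nra.
Qed.

Lemma exists_drift_function (a0 : Sigma) :
  positive_bernoulli p -> strongly_connected delta -> F != finset.set0 ->
  exists (lam : R) (h : Q -> R), [/\ 0 <= lam < 1, forall q, 1 <= h q <= 4 &
    forall q, (\esum_(a in [set: Sigma]) (p a * discount F q * h (delta q a))%:E
               <= (lam * h q)%:E)%E].
Proof.
move=> pb sc Fne; have [p01 _] := pb.
have [d [aq descent_aq]] := distance_to_accepting a0 sc Fne.
have /set0Pn [f fF] := Fne.
pose pi := \prod_(q : Q) p (aq q).
have pi0 : 0 < pi by apply: prodr_gt0 => q _; have /andP[] := p01 (aq q).
have piq q : pi <= p (aq q).
  rewrite /pi (bigD1 q) //=; apply: ler_piMr; first by have /andP[/ltW] := p01 (aq q).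
  by apply: prodr_ile1 => i _; have /andP[/ltW -> ->] := p01 (aq i).
pose r := pi / 2; pose N := (\max_(q : Q) d q)%N.
have r0 : 0 < r by rewrite divr_gt0.
have rh : r <= 2^-1 by have := piq f; have /andP[_] := p01 (aq f); rewrite /r; lra.
have aq_likely q : 2 * r <= p (aq q) by have := piq q; rewrite /r; lra.
have dN q : (d q <= N)%N by apply: leq_bigmax.
have rN0 : 0 < r ^+ N by apply: exprn_gt0.
have rk k : r ^+ k <= 1 by apply: exprn_ile1; [rewrite ltW | lra].
exists (1 - r ^+ N / 4), (fun q => 4 - r ^+ d q); split.
- by apply/andP; split; have := rk N; lra.
- move=> q; have := rk (d q); have : 0 < r ^+ d q by rewrite exprn_gt0.
  by move=> ? ?; apply/andP; split; lra.
- exact: drift_inequality pb descent_aq dN r0 rh aq_likely.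
Qed.

End DriftFunction.

Lemma exists_block_length (R : realType) (lam : R) : 0 <= lam < 1 ->
  exists K : nat, (0 < K)%N /\ lam ^+ K <= 4^-1.
Proof.
move=> /andP[lam0 lam1].
have lam_cvg : (GRing.exp lam : R ^nat) @ \oo --> 0 by apply: cvg_expr; rewrite ger0_norm.
have [K0 _ HK0] : \forall t \near \oo, `|lam ^+ t| < 4^-1.
  by apply: cvgr0_norm_lt lam_cvg _ _; rewrite invr_gt0.
exists K0.+1; split => //.
by have := HK0 K0.+1 (leqnSn K0); rewrite ger0_norm ?exprn_ge0 // => /ltW.
Qed.

Lemma expr_block_le (R : realType) (lam : R) (K n : nat) :
  0 <= lam <= 1 -> lam ^+ K <= 4^-1 -> lam ^+ n <= (4^-1) ^+ (n %/ K).
Proof.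
move=> /andP[lam0 lam1] lamK; apply: (@le_trans _ _ (lam ^+ (n %/ K * K))).
  by apply: ler_wiXn2l => //; exact: leq_divM.
by rewrite mulnC exprM; apply: lerXn2r; rewrite ?nnegrE ?exprn_ge0.
Qed.

Lemma half_block_cvg (R : realType) (K : nat) (C : R) : (0 < K)%N ->
  (fun n : nat => (C * (2^-1) ^+ (n %/ K))%:E) @ \oo --> 0%:E.
Proof.
move=> K0; apply: cvg_EFin; first exact: nearW.
have blocks_cvg : (fun n : nat => (n %/ K)%N) @ \oo --> \oo.
  apply/cvgnyPge => A; near=> n.
  rewrite leq_divRL //; near: n; exact: nbhs_infty_ge.
have half_cvg : (GRing.exp (2^-1 : R) : R ^nat) @ \oo --> 0.
  by apply: cvg_expr; rewrite ger0_norm ?invr_ge0 // invf_lt1 // ltr1n.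
have := cvgMl_tmp (a := C) (cvg_comp _ _ blocks_cvg half_cvg); rewrite mulr0; exact.
Unshelve. all: end_near.
Qed.

Lemma mu_E_n_decay (R : realType) (Sigma : countType) (p : Sigma -> R)
  (Q : finType) (delta : Q -> Sigma -> Q) (F : {set Q})
  (lam : R) (h : Q -> R) (K n : nat) (b : R) :
  (forall a, 0 <= p a) -> 0 <= lam < 1 -> (forall q, 1 <= h q <= 4) ->
  (forall q, (\esum_(a in [set: Sigma]) (p a * discount F q * h (delta q a))%:E
               <= (lam * h q)%:E)%E) ->
  (0 < K)%N -> lam ^+ K <= 4^-1 -> b * K%:R <= 1 ->
  (mu_p p (E_n delta F n b) <= ((#|Q|%:R * 4) * (2^-1) ^+ (n %/ K))%:E)%E.
Proof.
move=> p0 /andP[lam0 lam1] h14 drift K0 lamK bK; set j := (n %/ K)%N.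
have h1 q : 1 <= h q by have /andP[] := h14 q.
have mass_le q := discounted_mass_geometric p0 lam0 h1 drift n q.
have lamn : lam ^+ n <= (4^-1) ^+ j by apply: expr_block_le; rewrite // lam0 ltW.
have term_le q : (((2 : R) ^+ j)%:E * discounted_mass p delta F n q <=
    (4 * (2^-1) ^+ j : R)%:E)%E.
  apply: le_trans; first by apply: lee_wpmul2l (mass_le q); rewrite lee_fin exprn_ge0.
  rewrite -EFinM lee_fin; have /andP[_ h4] := h14 q.
  have -> : (2^-1 : R) ^+ j = 2 ^+ j * (4^-1) ^+ j.
    by rewrite -exprMn; congr (_ ^+ _); field.
  rewrite [leRHS]mulrCA ler_wpM2l ?exprn_ge0 // [leRHS]mulrC.
  by rewrite ler_pM ?exprn_ge0 //; apply: le_trans (h1 q).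
apply: le_trans (mu_E_n_chernoff delta F p0 n K0 bK) _.
apply: le_trans; first by apply: lee_sum => q _; exact: term_le.
by rewrite sumEFin lee_fin sumr_const -mulrA !mulr_natl.
Qed.

Theorem lemma5p4 (R : realType) (Sigma : countType) (a0 : Sigma)
  (p : Sigma -> R) (Q : finType) (delta : Q -> Sigma -> Q) (q_s : Q)
  (F : {set Q}) :
  positive_bernoulli p ->
  strongly_connected delta ->
  F != finset.set0 ->
  exists c : R, 0 < c /\
    forall eps : R, 0 < eps ->
      (fun n : nat => mu_p p (E_n delta F n (c - eps))) @ \oo --> 0%:E.
Proof.
move=> pb sc Fne.
have p0 a : 0 <= p a by have [/(_ a) /andP[/ltW]] := pb.
have [lam [h [lam01 h14 drift]]] := exists_drift_function a0 pb sc Fne.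
have [K [K0 lamK]] := exists_block_length lam01.
exists K%:R^-1; split; first by rewrite invr_gt0 ltr0n.
move=> eps eps0.
have bK : (K%:R^-1 - eps) * K%:R <= 1.
  rewrite mulrBl mulVf; last by rewrite pnatr_eq0 -lt0n.
  by rewrite gerBl mulr_ge0 ?ler0n ?ltW.
apply: (@squeeze_cvge _ _ _ _ (fun=> 0%E) _
   (fun n => ((#|Q|%:R * 4) * (2^-1) ^+ (n %/ K))%:E)); last 2 first.
- exact: cvg_cst.
- exact: half_block_cvg.
apply: nearW => n; apply/andP; split.
  by apply: esum_ge0 => w _; rewrite lee_fin mu_word_ge0.
exact: mu_E_n_decay p0 lam01 h14 drift K0 lamK bK.
Qed.
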